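(* If the $r\times r$ minors of an $n\times n$ symmetric matrix of indeterminates do not form a tropical basis, then the $r\times r$ minors of an $(n+1)\times(n+1)$ symmetric matrix of indeterminates do not form a tropical basis.
   Context: Let $\tilde K$ be the field of Hahn series $\sum_{\alpha\in A}c_\alpha t^\alpha$ ($A\subset\mathbb R$ well-ordered, $c_\alpha\in\mathbb C$); for nonzero $a\in\tilde K$, $\deg(a)$ is the smallest exponent with nonzero coefficient. A symmetric lift of a real symmetric matrix $A$ is a symmetric matrix $\tilde A$ over $\tilde K$ with all entries nonzero and $\deg(\tilde a_{i,j})=A_{i,j}$. For an $r\times r$ submatrix of $A$ with row index set $I$ and column index set $J$, each bijection $\rho:I\to J$ gives a monomial $\prod_{i\in I}X_{i,\rho(i)}$ in commuting variables subject to $X_{i,j}=X_{j,i}$, with value $\sum_{i\in I}A_{i,\rho(i)}$; the submatrix is symmetrically tropically singular if the minimum value is attained by at least two distinct monomials. The $r\times r$ minors of an $n\times n$ symmetric matrix of indeterminates form a tropical basis if for every real symmetric $n\times n$ matrix $A$: every $r\times r$ submatrix of $A$ is symmetrically tropically singular if and only if $A$ has a symmetric lift of rank at most $r-1$ (equivalently, the tropical prevariety of the tropicalized minors equals the tropicalization of the variety they define). *)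

From mathcomp Require Import all_boot all_order all_algebra.
From mathcomp Require Import boolp classical_sets fsbigop reals Rstruct.
From mathcomp.real_closed Require Import complex.

Set Implicit Arguments.
Unset Strict Implicit.
Unset Printing Implicit Defensive.
Import Order.TTheory GRing.Theory Num.Theory.
Local Open Scope classical_set_scope.
Local Open Scope ring_scope.

Notation RR := Rdefinitions.R.
Notation CC := (complex RR).

Definition well_ordered (A : set RR) : Prop :=
  forall B : set RR, B `<=` A -> B !=set0 ->
    exists2 b, B b & forall x, B x -> b <= x.

Definition hsupp (c : RR -> CC) : set RR := [set a | c a != 0].

Record hahn := Hahn {
  hcoef : RR -> CC ;
  hcoef_wo : well_ordered (hsupp hcoef) }.

(* coefficient of t^g in the product f * g of two Hahn series:
   sum over a of f_a g_(g-a) (the sum has finitely many nonzero terms). *)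
Definition hmulc (f g : hahn) (x : RR) : CC :=
  \sum_(a \in [set: RR]) (hcoef f a * hcoef g (x - a)).

Definition hdeg_is (f : hahn) (d : RR) : Prop :=
  hcoef f d != 0 /\ forall a, a < d -> hcoef f a = 0.

Definition hnonzero (f : hahn) : Prop := exists a, hcoef f a != 0.

Definition sym_lift (n : nat) (A : 'M[RR]_n) (L : 'I_n -> 'I_n -> hahn) : Prop :=
  (forall i j, L i j = L j i) /\
  (forall i j, hnonzero (L i j) /\ hdeg_is (L i j) (A i j)).

(* rank of the n x n matrix L over the field of Hahn series is at most k:
   L = B C with B an n x k and C a k x n matrix over the Hahn series field
   (entrywise equality of coefficients). *)
Definition rank_le (n : nat) (L : 'I_n -> 'I_n -> hahn) (k : nat) : Prop :=
  exists (B : 'I_n -> 'I_k -> hahn) (C : 'I_k -> 'I_n -> hahn),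
    forall i j x, hcoef (L i j) x = \sum_(l < k) hmulc (B i l) (C l j) x.

Definition is_bij (n : nat) (I J : {set 'I_n}) (rho : 'I_n -> 'I_n) : Prop :=
  {in I &, injective rho} /\ rho @: I = J.

Definition mon_val (n : nat) (A : 'M[RR]_n) (I : {set 'I_n}) (rho : 'I_n -> 'I_n) : RR :=
  \sum_(i in I) A i (rho i).

(* exponent of the variable X_{a,b} = X_{b,a} in the monomial prod_{i in I} X_{i, rho i} *)
Definition mon_exp (n : nat) (I : {set 'I_n}) (rho : 'I_n -> 'I_n) (a b : 'I_n) : nat :=
  #|[set i in I | ((i == a) && (rho i == b)) || ((i == b) && (rho i == a))]|.

Definition sym_trop_singular (n : nat) (A : 'M[RR]_n) (I J : {set 'I_n}) : Prop :=
  exists rho1 rho2 : 'I_n -> 'I_n,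
    [/\ is_bij I J rho1, is_bij I J rho2,
        (forall rho, is_bij I J rho -> mon_val A I rho1 <= mon_val A I rho),
        mon_val A I rho2 = mon_val A I rho1 &
        exists a b, mon_exp I rho1 a b <> mon_exp I rho2 a b].

Definition tropical_basis (n r : nat) : Prop :=
  forall A : 'M[RR]_n, A^T = A ->
    ((forall I J : {set 'I_n}, #|I| = r -> #|J| = r -> sym_trop_singular A I J)
     <-> exists L, sym_lift A L /\ rank_le L r.-1).

From mathcomp Require Import all_boot all_order all_algebra all_fingroup.
From mathcomp Require Import boolp Rstruct.
From mathcomp.real_closed Require Import complex.
From mathcomp Require Import zify.

(* Let A witness the failure for size n, and let A' be A with its last row and
   column duplicated.  A symmetric lift of A' of rank < r restricts to one of A,
   and duplicating a lift of A gives one of A'.  An r x r submatrix of A' whose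
   row (or column) indices contain both duplicated indices is symmetrically
   tropically singular: composing an optimal bijection with the transposition
   of the two indices keeps its value but changes its monomial.  Every other
   submatrix of A', and every submatrix of A, is a reindexing of a submatrix of
   the other matrix, and symmetric tropical singularity is invariant under
   reindexing since the exponents of a pulled-back monomial are sums of
   exponents of the original one.  So A' witnesses the failure for size n + 1. *)

Set Implicit Arguments.
Unset Strict Implicit.
Unset Printing Implicit Defensive.
Import Order.TTheory GRing.Theory Num.Theory.

Section Bijections.
Variable m : nat.
Implicit Types (I J K S : {set 'I_m}) (rho sigma : 'I_m -> 'I_m).

Lemma is_bijP I J rho :
  reflect (is_bij I J rho) (dinjectiveb rho I && (rho @: I == J)).
Proof.
by apply: (iffP andP) => [[/dinjectiveP ? /eqP] | [/dinjectiveP ? ->]].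
Qed.

Lemma is_bij_comp I J K rho sigma :
  is_bij I J rho -> is_bij J K sigma -> is_bij I K (sigma \o rho).
Proof.
move=> [rho_inj rhoI] [sigma_inj sigmaJ]; split; last by rewrite imset_comp rhoI.
move=> x y xI yI /= /sigma_inj eq_rho; apply: rho_inj => //.
by apply: eq_rho; rewrite -rhoI imset_f.
Qed.

Lemma is_bij_tperm S u v : u \in S -> v \in S -> is_bij S S (tperm u v).
Proof.
move=> uS vS; split; first by move=> x y _ _; apply: perm_inj.
apply/eqP; rewrite eqEcard card_imset ?leqnn ?andbT; last exact: perm_inj.
by apply/subsetP => _ /imsetP[i iS ->]; case: tpermP.
Qed.

Lemma exists_bij I J : #|I| = #|J| -> exists rho, is_bij I J rho.
Proof.
move=> IJ; pose rho i := nth i (enum J) (index i (enum I)).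
have index_lt i : i \in I -> index i (enum I) < size (enum J).
  by move=> iI; rewrite -cardE -IJ cardE index_mem mem_enum.
have rho_inj : {in I &, injective rho}.
  move=> x y xI yI; rewrite /rho (set_nth_default y) ?index_lt // => /eqP.
  rewrite nth_uniq ?index_lt ?enum_uniq // => /eqP eq_index.
  by rewrite -(nth_index x (_ : x \in enum I)) ?mem_enum // eq_index nth_index ?mem_enum.
exists rho; split => //; apply/eqP; rewrite eqEcard card_in_imset // IJ leqnn andbT.
by apply/subsetP => _ /imsetP[i iI ->]; rewrite -mem_enum mem_nth ?index_lt.
Qed.

Lemma exists_min_mon_val (A : 'M[RR]_m) I J : #|I| = #|J| ->
  exists2 rho, is_bij I J rho &
    forall sigma, is_bij I J sigma -> (mon_val A I rho <= mon_val A I sigma)%R.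
Proof.
case/exists_bij => rho0 bij_rho0.
have finfunK (f : 'I_m -> 'I_m) : fun_of_fin (finfun f) = f by apply/funext/ffunE.
pose bijb (f : {ffun 'I_m -> 'I_m}) := dinjectiveb f I && (f @: I == J).
have bijb_rho0 : bijb (finfun rho0) by apply/is_bijP; rewrite finfunK.
have [f /is_bijP bij_f f_min] :=
  arg_minP (fun f : {ffun _ -> _} => mon_val A I f) bijb_rho0.
exists (fun_of_fin f) => // sigma /is_bijP bij_sigma.
by rewrite -(finfunK sigma); apply: f_min; rewrite /bijb finfunK.
Qed.

End Bijections.

Definition upair_eqb m (a b x y : 'I_m) : bool :=
  ((x == a) && (y == b)) || ((x == b) && (y == a)).

Lemma mon_expE m (I : {set 'I_m}) rho a b :
  mon_exp I rho a b = #|[set i in I | upair_eqb a b i (rho i)]|.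
Proof. by []. Qed.

Lemma upair_eqbC m (a b x y : 'I_m) : upair_eqb a b x y = upair_eqb a b y x.
Proof. by rewrite /upair_eqb orbC andbC [X in _ || X]andbC. Qed.

Lemma sum_upair_eqb m (g : 'I_m -> 'I_m -> bool) x y :
  (forall x y, g x y = g y x) ->
  \sum_(a < m) \sum_(b < m | a <= b) g a b * upair_eqb a b x y = g x y.
Proof.
move=> gC; wlog le_xy : x y / x <= y.
  move=> le_sum; case: (leqP x y) => [/le_sum // | /ltnW /le_sum].
  by rewrite gC => <-; apply: eq_bigr => a _; apply: eq_bigr => b _; rewrite upair_eqbC.
have upairE (a b : 'I_m) : a <= b -> upair_eqb a b x y = (a == x) && (b == y).
  move=> le_ab; rewrite /upair_eqb [x == a]eq_sym [y == b]eq_sym orb_idr //.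
  case/andP=> /eqP eq_xb /eqP eq_ya; rewrite -eq_xb -eq_ya.
  suff -> : x = y by rewrite !eqxx.
  by apply/val_inj/eqP; rewrite eqn_leq le_xy eq_xb eq_ya.
under eq_bigr do under eq_bigr => b le_ab do rewrite upairE //.
rewrite (bigD1 x) //= (bigD1 y) //= !eqxx muln1.
rewrite big1 ?addn0 => [|b /andP[_ /negbTE ->]]; last by rewrite andbF muln0.
rewrite big1 ?addn0 // => a /negbTE ne_ax.
by rewrite big1 // => b _; rewrite ne_ax muln0.
Qed.

Lemma card_sym_mon_exp m (I : {set 'I_m}) rho (g : 'I_m -> 'I_m -> bool) :
  (forall x y, g x y = g y x) ->
  #|[set i in I | g i (rho i)]| =
    \sum_(a < m) \sum_(b < m | a <= b) g a b * mon_exp I rho a b.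
Proof.
move=> gC; have card_sep (P : pred 'I_m) : #|[set i in I | P i]| = \sum_(i in I) P i.
  rewrite -sum1_card big_mkcond [RHS]big_mkcond; apply: eq_bigr => i _.
  by rewrite inE; case: (i \in I); case: (P i).
under [RHS]eq_bigr do under eq_bigr do rewrite mon_expE card_sep big_distrr.
under [RHS]eq_bigr do rewrite exchange_big.
by rewrite exchange_big card_sep; apply: eq_bigr => i _; rewrite -(sum_upair_eqb _ _ gC).
Qed.

Lemma eq_mon_exp_card_sym m (I : {set 'I_m}) rho sigma (g : 'I_m -> 'I_m -> bool) :
  (forall x y, g x y = g y x) ->
  (forall a b, mon_exp I rho a b = mon_exp I sigma a b) ->
  #|[set i in I | g i (rho i)]| = #|[set i in I | g i (sigma i)]|.
Proof.
move=> gC eq_exp; rewrite !card_sym_mon_exp //.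
by apply: eq_bigr => a _; apply: eq_bigr => b _; rewrite eq_exp.
Qed.

Section Reindex.
Variables (m m' : nat) (A : 'M[RR]_m) (A' : 'M[RR]_m') (s : 'I_m' -> 'I_m).
Variables I J : {set 'I_m'}.
Hypothesis A'E : forall i j, A' i j = A (s i) (s j).
Hypothesis s_injI : {in I &, injective s}.
Hypothesis s_injJ : {in J &, injective s}.

Definition intertwines (rho : 'I_m -> 'I_m) (rho' : 'I_m' -> 'I_m') :=
  {in I, forall i, s (rho' i) = rho (s i)}.

Lemma mon_val_reindex rho rho' :
  intertwines rho rho' -> mon_val A' I rho' = mon_val A (s @: I) rho.
Proof.
move=> rho_rho'; rewrite /mon_val big_imset //.
by apply: eq_bigr => i iI; rewrite A'E rho_rho'.
Qed.

Lemma is_bij_push rho rho' :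
  intertwines rho rho' -> is_bij I J rho' -> is_bij (s @: I) (s @: J) rho.
Proof.
move=> rho_rho' [rho'_inj rho'I]; split.
  move=> _ _ /imsetP[x xI ->] /imsetP[y yI ->].
  rewrite -!rho_rho' // => /s_injJ eq_rho'; congr s; apply: rho'_inj => //.
  by apply: eq_rho'; rewrite -rho'I imset_f.
rewrite -rho'I -!imset_comp; apply: eq_in_imset => i iI /=.
by rewrite rho_rho'.
Qed.

Lemma is_bij_pull rho rho' :
  intertwines rho rho' -> {in I, forall i, rho' i \in J} ->
  is_bij (s @: I) (s @: J) rho -> is_bij I J rho'.
Proof.
move=> rho_rho' rho'J [rho_inj rhoI]; split.
  move=> x y xI yI eq_rho'; apply: s_injI => //.
  by apply: rho_inj; rewrite ?imset_f // -!rho_rho' // eq_rho'.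
have s_rho'I : s @: (rho' @: I) = s @: J.
  by rewrite -rhoI -!imset_comp; apply: eq_in_imset => i iI /=; rewrite rho_rho'.
apply/setP => j; apply/idP/idP => [/imsetP[i iI ->] | jJ]; first exact: rho'J.
have /imsetP[k k_rho'I eq_sk] : s j \in s @: (rho' @: I) by rewrite s_rho'I imset_f.
have kJ : k \in J by case/imsetP: k_rho'I => i iI ->; apply: rho'J.
by rewrite (s_injJ jJ kJ eq_sk).
Qed.

Lemma mon_exp_reindex rho rho' : intertwines rho rho' -> forall a b,
  mon_exp (s @: I) rho a b = #|[set i in I | upair_eqb a b (s i) (s (rho' i))]|.
Proof.
move=> rho_rho' a b; rewrite mon_expE.
have -> : [set x in s @: I | upair_eqb a b x (rho x)] =
          s @: [set i in I | upair_eqb a b (s i) (s (rho' i))].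
  apply/setP => x; rewrite inE; apply/andP/imsetP => [[/imsetP[i iI ->] ab] | [i + ->]].
    by exists i; rewrite // inE iI rho_rho'.
  by rewrite inE => /andP[iI ab]; rewrite imset_f // -rho_rho'.
by rewrite card_in_imset // => x y; rewrite !inE => /andP[xI _] /andP[yI _]; apply: s_injI.
Qed.

Lemma exists_push rho' : exists rho, intertwines rho rho'.
Proof.
exists (fun x => if [pick i in I | s i == x] is Some i then s (rho' i) else x).
move=> i iI; case: pickP => [j /andP[jI /eqP eq_s] | /(_ i)].
  by rewrite (s_injI jI iI eq_s).
by rewrite iI eqxx.
Qed.

Lemma exists_pull rho : is_bij (s @: I) (s @: J) rho ->
  exists2 rho', intertwines rho rho' & is_bij I J rho'.
Proof.
move=> bij_rho; have [_ rhoI] := bij_rho.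
pose rho' i := odflt i [pick j in J | s j == rho (s i)].
have rho'E i : i \in I -> rho' i \in J /\ s (rho' i) = rho (s i).
  move=> iI; rewrite /rho'; case: pickP => [j /andP[jJ /eqP] | no_j] //=.
  have : rho (s i) \in s @: J by rewrite -rhoI !imset_f.
  by case/imsetP => j jJ eq_sj; have := no_j j; rewrite jJ eq_sj eqxx.
have rho_rho' : intertwines rho rho' by move=> i /rho'E[].
exists rho' => //; apply: is_bij_pull rho_rho' _ bij_rho.
by move=> i /rho'E[].
Qed.

Lemma sym_trop_singular_reindex :
  sym_trop_singular A (s @: I) (s @: J) -> sym_trop_singular A' I J.
Proof.
case=> rho1 [rho2 [bij1 bij2 rho1_min eq_val [a [b ne_ab]]]].
have [rho1' rho1_rho1' bij1'] := exists_pull bij1.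
have [rho2' rho2_rho2' bij2'] := exists_pull bij2.
exists rho1', rho2'; split => //.
- move=> sigma' bij_sigma'; have [sigma sigma_sigma'] := exists_push sigma'.
  rewrite (mon_val_reindex rho1_rho1') (mon_val_reindex sigma_sigma').
  exact/rho1_min/(is_bij_push sigma_sigma').
- by rewrite (mon_val_reindex rho1_rho1') (mon_val_reindex rho2_rho2').
- apply: contrapT => eq_exp'; apply: ne_ab.
  rewrite (mon_exp_reindex rho1_rho1') (mon_exp_reindex rho2_rho2').
  apply: (eq_mon_exp_card_sym (g := fun x y => upair_eqb a b (s x) (s y))) => [x y | a' b'].
    exact: upair_eqbC.
  apply/eqP/negPn/negP => /eqP ne_ab'; apply: eq_exp'; by exists a', b'.
Qed.

End Reindex.

Section DuplicateIndices.
Variables (m : nat) (u v : 'I_m).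
Hypothesis neq_uv : u != v.

Lemma mon_exp_tperm_row (I : {set 'I_m}) rho :
  {in I &, injective rho} -> u \in I -> v \in I ->
  mon_exp I (rho \o tperm u v) u (rho u) < mon_exp I rho u (rho u).
Proof.
move=> rho_inj uI vI; rewrite !mon_expE; apply/proper_card/properP; split.
  apply/subsetP => i; rewrite !inE /= => /andP[-> /=].
  case: tpermP => [-> | -> | _ _] //=; first by rewrite /upair_eqb !eqxx.
  rewrite /upair_eqb eq_sym (negbTE neq_uv) /= => /andP[/eqP eq_v /eqP eq_u].
  by move: neq_uv; rewrite eq_v eq_u eqxx.
exists u; first by rewrite inE uI /upair_eqb !eqxx.
have ne_rho : rho v != rho u by apply: contra neq_uv => /eqP/rho_inj -> //.
rewrite inE uI /= tpermL /upair_eqb eqxx (negbTE ne_rho) /=.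
by apply/negP => /andP[/eqP eq_u /eqP eq_vu]; move: ne_rho; rewrite eq_vu -eq_u eqxx.
Qed.

Lemma mon_exp_tperm_col (I : {set 'I_m}) rho p :
  {in I &, injective rho} -> p \in I -> rho p = u ->
  mon_exp I (tperm u v \o rho) p u < mon_exp I rho p u.
Proof.
move=> rho_inj pI rho_p; rewrite !mon_expE; apply/proper_card/properP; split.
  have upair_u i : upair_eqb p u i u -> i = p.
    by rewrite /upair_eqb eqxx andbT => /orP[/eqP // | /andP[/eqP -> /eqP //]].
  apply/subsetP => i; rewrite !inE /= => /andP[iI]; rewrite iI /=.
  case: tpermP => [rho_i | rho_i /upair_u eq_ip | _ _] //.
    have eq_ip : i = p by apply: rho_inj; rewrite // rho_i rho_p.
    by rewrite eq_ip rho_p /upair_eqb !eqxx.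
  by move: neq_uv; rewrite -rho_p -rho_i eq_ip eqxx.
exists p; first by rewrite inE pI rho_p /upair_eqb !eqxx.
rewrite inE pI /= rho_p tpermL /upair_eqb eqxx [v == u]eq_sym (negbTE neq_uv) /=.
by apply/negP => /andP[/eqP eq_pu /eqP eq_vp]; move: neq_uv; rewrite eq_vp eq_pu eqxx.
Qed.

Lemma sym_trop_singular_dup_rows (A : 'M[RR]_m) (I J : {set 'I_m}) :
  (forall i j, A (tperm u v i) j = A i j) -> #|I| = #|J| -> u \in I -> v \in I ->
  sym_trop_singular A I J.
Proof.
move=> A_rows IJ uI vI; have [rho bij_rho rho_min] := exists_min_mon_val A IJ.
have bij_t := is_bij_tperm uI vI.
exists rho, (rho \o tperm u v); split => //; first exact: is_bij_comp bij_t bij_rho.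
- rewrite /mon_val -[in RHS](proj2 bij_t) big_imset /=.
    by apply: eq_bigr => i _; rewrite A_rows.
  by move=> x y _ _; apply: perm_inj.
- exists u, (rho u); apply/eqP; rewrite neq_ltn mon_exp_tperm_row ?orbT //.
  exact: (proj1 bij_rho).
Qed.

Lemma sym_trop_singular_dup_cols (A : 'M[RR]_m) (I J : {set 'I_m}) :
  (forall i j, A i (tperm u v j) = A i j) -> #|I| = #|J| -> u \in J -> v \in J ->
  sym_trop_singular A I J.
Proof.
move=> A_cols IJ uJ vJ; have [rho bij_rho rho_min] := exists_min_mon_val A IJ.
exists rho, (tperm u v \o rho); split => //.
- exact: is_bij_comp bij_rho (is_bij_tperm uJ vJ).
- by apply: eq_bigr => i _; rewrite A_cols.
- have [rho_inj rhoI] := bij_rho.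
  have /imsetP[p pI rho_p] : u \in rho @: I by rewrite rhoI.
  exists p, u; apply/eqP; rewrite neq_ltn mon_exp_tperm_col ?orbT //.
Qed.

End DuplicateIndices.

Lemma sym_lift_rank_le_reindex m m' (A : 'M[RR]_m) (A' : 'M[RR]_m')
    (s : 'I_m -> 'I_m') k :
  (forall i j, A i j = A' (s i) (s j)) ->
  (exists L, sym_lift A' L /\ rank_le L k) -> exists L, sym_lift A L /\ rank_le L k.
Proof.
move=> AE [L [[L_sym L_deg] [B [C L_BC]]]].
exists (fun i j => L (s i) (s j)); split.
  by split=> i j; [rewrite L_sym | rewrite AE].
by exists (fun i l => B (s i) l), (fun l j => C l (s j)).
Qed.

Lemma well_ordered_hsupp0 : well_ordered (hsupp (fun=> 0%R)).
Proof. by move=> B sB [x /sB]; rewrite /hsupp /= eqxx. Qed.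

Definition hahn0 : hahn := Hahn well_ordered_hsupp0.

Lemma tropical_basis0 r : 0 < r -> tropical_basis 0 r.
Proof.
move=> r_gt0 A _; split=> [_ | _ I J cardI]; last first.
  by have := max_card I; rewrite card_ord cardI leqNgt r_gt0.
exists (fun _ _ => hahn0); split; first by split; case.
by exists (fun _ _ => hahn0), (fun _ _ => hahn0); case.
Qed.

Section DuplicateLast.
Variable k : nat.

Definition collapse_last (i : 'I_k.+2) : 'I_k.+1 := inord (minn i k).

Notation widen := (widen_ord (leqnSn k.+1)).
Notation u := (widen ord_max).
Notation v := (@ord_max k.+1).

Lemma collapse_last_val i : collapse_last i = minn i k :> nat.
Proof. by rewrite inordK // ltnS geq_minr. Qed.

Lemma collapse_lastK : cancel widen collapse_last.
Proof.
by move=> i; apply: ord_inj; rewrite collapse_last_val /=; have := ltn_ord i; lia.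
Qed.

Lemma neq_dup_last : u != v.
Proof. by rewrite -val_eqE /= neq_ltn ltnSn. Qed.

Lemma collapse_last_tperm i : collapse_last (tperm u v i) = collapse_last i.
Proof.
by case: tpermP => [-> | -> | _ _] //; apply: ord_inj; rewrite !collapse_last_val /=; lia.
Qed.

Lemma collapse_last_inj (S : {set 'I_k.+2}) :
  ~~ ((u \in S) && (v \in S)) -> {in S &, injective collapse_last}.
Proof.
move=> not_uvS x y xS yS /(congr1 (@nat_of_ord _)); rewrite !collapse_last_val.
move=> eq_min; apply: ord_inj; move: not_uvS; apply: contraNeq => ne_xy.
have lt_x := ltn_ord x; have lt_y := ltn_ord y.
have [[ex ey] | [ex ey]] : x = u /\ y = v \/ x = v /\ y = u.
  by case: (ltnP x k.+1) => lx; [left | right]; split; apply: ord_inj => /=; lia.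
all: by rewrite -ex -ey xS yS.
Qed.

Definition dup_last (A : 'M[RR]_k.+1) : 'M[RR]_k.+2 :=
  \matrix_(i, j) A (collapse_last i) (collapse_last j).

Lemma dup_last_sym (A : 'M[RR]_k.+1) : (A^T)%R = A -> ((dup_last A)^T)%R = dup_last A.
Proof. by move=> A_sym; apply/matrixP => i j; rewrite !mxE -[in LHS]A_sym mxE. Qed.

Lemma dup_last_widen (A : 'M[RR]_k.+1) i j : A i j = dup_last A (widen i) (widen j).
Proof. by rewrite mxE !collapse_lastK. Qed.

Lemma sym_trop_singular_dup_last (A : 'M[RR]_k.+1) r :
  (forall I J : {set 'I_k.+1}, #|I| = r -> #|J| = r -> sym_trop_singular A I J) ->
  forall I J : {set 'I_k.+2}, #|I| = r -> #|J| = r -> sym_trop_singular (dup_last A) I J.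
Proof.
move=> A_sing I J cardI cardJ; have IJ : #|I| = #|J| by rewrite cardI cardJ.
have dup_lastE i j : dup_last A i j = A (collapse_last i) (collapse_last j) by rewrite mxE.
have dup_rows i j : dup_last A (tperm u v i) j = dup_last A i j.
  by rewrite !dup_lastE collapse_last_tperm.
have dup_cols i j : dup_last A i (tperm u v j) = dup_last A i j.
  by rewrite !dup_lastE collapse_last_tperm.
have [/andP[uI vI] | not_uvI] := boolP ((u \in I) && (v \in I)).
  exact: (sym_trop_singular_dup_rows neq_dup_last dup_rows IJ uI vI).
have [/andP[uJ vJ] | not_uvJ] := boolP ((u \in J) && (v \in J)).
  exact: (sym_trop_singular_dup_cols neq_dup_last dup_cols IJ uJ vJ).
have injI := collapse_last_inj not_uvI; have injJ := collapse_last_inj not_uvJ.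
apply: (sym_trop_singular_reindex dup_lastE injI injJ).
by apply: A_sing; rewrite card_in_imset.
Qed.

Lemma sym_trop_singular_of_dup_last (A : 'M[RR]_k.+1) r :
  (forall I J : {set 'I_k.+2}, #|I| = r -> #|J| = r ->
     sym_trop_singular (dup_last A) I J) ->
  forall I J : {set 'I_k.+1}, #|I| = r -> #|J| = r -> sym_trop_singular A I J.
Proof.
move=> dup_sing I J cardI cardJ; have widen_inj := can_inj collapse_lastK.
have widen_in_inj (S : {set 'I_k.+1}) : {in S &, injective widen}.
  by move=> x y _ _ /widen_inj.
apply: (sym_trop_singular_reindex (dup_last_widen A) (widen_in_inj I) (widen_in_inj J)).
by apply: dup_sing; rewrite card_imset.
Qed.

End DuplicateLast.

Theorem corollary3 (n r : nat) :
  (0 < r)%N -> ~ tropical_basis n r -> ~ tropical_basis n.+1 r.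
Proof.
move=> r_gt0 not_basis basis_succ; apply: not_basis.
case: n basis_succ => [_ | k basis_succ]; first exact: tropical_basis0.
move=> A A_sym; have [sing_lift lift_sing] := basis_succ _ (dup_last_sym A_sym).
split=> [A_sing | A_lift].
- apply: sym_lift_rank_le_reindex (dup_last_widen A) (sing_lift _).
  exact: sym_trop_singular_dup_last.
- apply: sym_trop_singular_of_dup_last (lift_sing _).
  by apply: sym_lift_rank_le_reindex A_lift => i j; rewrite mxE.
Qed.
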